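(* Consider the network Polya contagion process on a connected undirected graph $\mathcal{G}=(V,\mathcal{E})$ with $\Delta_{r,i}(n)=\Delta_{b,i}(n)=\Delta$ and $T_i=T$ for all nodes $i\in V$ and all times $n$. Fix a node $i$. Then the individual red-ball proportion process $\{U_{i,n}\}_{n=1}^\infty$ is a martingale with respect to the whole-network draw process $\{Z_n\}_{n=1}^\infty=\{(Z_{1,n},\dots,Z_{N,n})\}_{n=1}^\infty$ if and only if, almost surely (for all $n$), \[ \frac{1}{|\mathcal{N}_i|}\sum_{j\in\mathcal{N}_i}U_{j,n-1}=U_{i,n-1}. \]
   Context: Network Polya contagion process: $\mathcal{G}=(V,\mathcal{E})$ is a connected undirected graph without self-loops, $V=\{1,\dots,N\}$, $\mathcal{N}_i=\{v:(i,v)\in\mathcal{E}\}$, $\mathcal{N}_i'=\{i\}\cup\mathcal{N}_i$. Each node $i$ has an urn initially containing $R_i\in\mathbb{Z}_{>0}$ red and $B_i\in\mathbb{Z}_{>0}$ black balls, $T_i=R_i+B_i$. The super urn of node $i$ is the union of the urns of nodes in $\mathcal{N}_i'$. At each time $t=1,2,\dots$ every node $i$ simultaneously draws from its super urn; $Z_{i,t}=1$ if red, $0$ if black; then $\Delta_{r,i}(t)\ge0$ red balls (if red drawn) or $\Delta_{b,i}(t)\ge0$ black balls (if black drawn) are added to node $i$'s own urn. Let $X_{j,n}=T_j+\sum_{t=1}^n\big(Z_{j,t}\Delta_{r,j}(t)+(1-Z_{j,t})\Delta_{b,j}(t)\big)$ and $U_{j,n}=\big(R_j+\sum_{t=1}^nZ_{j,t}\Delta_{r,j}(t)\big)/X_{j,n}$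 (proportion of red balls in node $j$'s own urn after the $n$th draw), and $S_{i,n}=\sum_{j\in\mathcal{N}_i'}U_{j,n}X_{j,n}/\sum_{j\in\mathcal{N}_i'}X_{j,n}$ (proportion of red in node $i$'s super urn). Given the whole history $\{Z_j^{n-1}\}_{j=1}^N$, the time-$n$ draws are conditionally independent with $P(Z_{i,n}=1\mid\{Z_j^{n-1}\}_{j=1}^N)=S_{i,n-1}$. ''Martingale with respect to $\{Z_n\}$'' means $E|U_{i,n}|<\infty$ and $E[U_{i,n}\mid Z_1,\dots,Z_{n-1}]=U_{i,n-1}$ a.s. for all $n$. *)

From HB Require Import structures.
From mathcomp Require Import all_boot all_order all_algebra.
From mathcomp Require Import reals.
Set Implicit Arguments. Unset Strict Implicit. Unset Printing Implicit Defensive.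
Import Order.TTheory GRing.Theory Num.Theory.
Local Open Scope ring_scope.

(* A draw vector at one time is  z : {ffun 'I_N -> bool}  (z j = Z_{j,t}).
   A history Z_1,...,Z_n is a sequence  h : seq {ffun 'I_N -> bool}
   of size n, in time order (nth _ h t = Z_{t+1}).
   Parameters: initial red/black counts Rb Bb : 'I_N -> nat, and
   deterministic reinforcements Dr Db : 'I_N -> nat -> nat,
   Dr j t = Delta_{r,j}(t), Db j t = Delta_{b,j}(t).
   Graph: e : rel 'I_N (intended symmetric, irreflexive). *)

Section Polya.
Variable R : realType.
Variable N : nat.
Variables (e : rel 'I_N) (Rb Bb : 'I_N -> nat) (Dr Db : 'I_N -> nat -> nat).

Definition draw := {ffun 'I_N -> bool}.

Definition nbhd (i : 'I_N) : {set 'I_N} := [set j | e i j].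
Definition cnbhd (i : 'I_N) : {set 'I_N} := i |: nbhd i.

Definition red_count (j : 'I_N) (h : seq draw) : nat :=
  Rb j + \sum_(t < size h) (if nth [ffun=> false] h t j then Dr j t.+1 else 0).

Definition tot_count (j : 'I_N) (h : seq draw) : nat :=
  (Rb j + Bb j) +
  \sum_(t < size h) (if nth [ffun=> false] h t j then Dr j t.+1 else Db j t.+1).

Definition Uprop (j : 'I_N) (h : seq draw) : R :=
  (red_count j h)%:R / (tot_count j h)%:R.

Definition Sprop (i : 'I_N) (h : seq draw) : R :=
  (\sum_(j in cnbhd i) Uprop j h * (tot_count j h)%:R) /
  (\sum_(j in cnbhd i) (tot_count j h)%:R).

(* P(Z_{n+1} = z | history h), conditionally independent draws *)
Definition step_prob (h : seq draw) (z : draw) : R :=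
  \prod_(i : 'I_N) (if z i then Sprop i h else 1 - Sprop i h).

Definition hist_prob (h : seq draw) : R :=
  \prod_(t < size h) step_prob (take t h) (nth [ffun=> false] h t).

Definition cond_exp_U (i : 'I_N) (h : seq draw) : R :=
  \sum_(z : draw) step_prob h z * Uprop i (rcons h z).

(* {U_{i,n}} is a martingale w.r.t. {Z_n}: for every n >= 1,
   E[U_{i,n} | Z_1..Z_{n-1}] = U_{i,n-1} almost surely, i.e. on every
   history of length n-1 having positive probability.  (Integrability is
   automatic: U takes values in [0,1] and the sample space is discrete.) *)
Definition polya_martingale (i : 'I_N) : Prop :=
  forall n : nat, (0 < n)%N -> forall h : seq draw, size h = n.-1 ->
    0 < hist_prob h -> cond_exp_U i h = Uprop i h.

End Polya.

From HB Require Import structures.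
From mathcomp Require Import all_boot all_order all_algebra.
From mathcomp Require Import reals.
From mathcomp Require Import ring.
Set Implicit Arguments.
Unset Strict Implicit.
Unset Printing Implicit Defensive.
Import Order.TTheory GRing.Theory Num.Theory.
Local Open Scope ring_scope.

(* With equal initial urn sizes T and a common reinforcement D, every urn
   holds X_n = T + n D balls at time n.  Hence the super-urn proportion S_{i,n}
   is the plain mean of the U_{j,n} over the closed neighbourhood, and since
   node i draws red with probability S_{i,n},
     E[U_{i,n+1} | history] - U_{i,n} = D / X_{n+1} * (S_{i,n} - U_{i,n}),
   while S_{i,n} - U_{i,n} = k/(k+1) * (mean of U_{j,n} over N_i - U_{i,n})
   with k = |N_i| > 0 by connectivity. *)

Lemma sum_prod_bernoulli (R : comRingType) (I : finType) (p : I -> R) :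
  \sum_(z : {ffun I -> bool}) \prod_k (if z k then p k else 1 - p k) = 1.
Proof.
rewrite -(bigA_distr_bigA (fun k (b : bool) => if b then p k else 1 - p k)).
by apply: big1 => k _; rewrite big_bool /= addrCA subrr addr0.
Qed.

Lemma sum_prod_bernoulli_marginal (R : comRingType) (I : finType) (p : I -> R) (i : I) :
  \sum_(z : {ffun I -> bool}) (\prod_k (if z k then p k else 1 - p k)) * (z i)%:R
    = p i.
Proof.
(* Zeroing the weight of [false] at [i] turns the marginal into a product sum. *)
pose q k (b : bool) := if b then p k else if k == i then 0 else 1 - p k.
transitivity (\sum_(z : {ffun I -> bool}) \prod_k q k (z k)).
  apply: eq_bigr => z _; case zi: (z i).
    rewrite mulr1; apply: eq_bigr => k _; rewrite /q.
    by case: ifP => // zk; case: eqP => // ki; rewrite -ki zk in zi.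
  by rewrite mulr0 (bigD1 i) //= /q zi eqxx mul0r.
rewrite -(bigA_distr_bigA q) (bigD1 i) //= big_bool /q /= eqxx addr0.
rewrite big1 ?mulr1 // => k /negbTE ki.
by rewrite big_bool /= ki addrCA subrr addr0.
Qed.

Lemma mean_setU1_sub (R : numFieldType) (I : finType) (A : {set I}) (i : I)
    (u : I -> R) :
  i \notin A ->
  #|i |: A|%:R^-1 * \sum_(j in i |: A) u j - u i
    = #|A|%:R / #|A|.+1%:R * (#|A|%:R^-1 * \sum_(j in A) u j - u i).
Proof.
move=> iA; rewrite cardsU1 iA big_setU1 //= add1n.
have [A0 | Agt0] := posnP #|A|.
  rewrite (cards0_eq A0) big_set0 cards0 !mul0r invr1 mul1r addr0.
  exact: subrr.
have cardS_neq0 : #|A|.+1%:R != 0 :> R by rewrite pnatr_eq0.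
have card_neq0 : #|A|%:R != 0 :> R by rewrite pnatr_eq0 -lt0n.
by rewrite -natr1 in cardS_neq0 *; field; rewrite card_neq0 cardS_neq0.
Qed.

Lemma eq_iff_subr_mul (R : idomainType) (a b c x y : R) :
  c != 0 -> a - b = c * (x - y) -> a = b <-> x = y.
Proof.
move=> c_neq0 abE; split=> [ab | xy]; apply/eqP; rewrite -subr_eq0.
  by move: abE; rewrite ab subrr => /esym/eqP; rewrite mulf_eq0 (negbTE c_neq0).
by rewrite abE xy subrr mulr0.
Qed.

Lemma connected_nbhd_gt0 (N : nat) (e : rel 'I_N) (i : 'I_N) :
  (1 < N)%N -> (forall u v, connect e u v) -> (0 < #|nbhd e i|)%N.
Proof.
move=> N_gt1 e_conn.
have [v] : exists v, v \in [set~ i].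
  by apply/set0Pn; rewrite -card_gt0 cardsC1 card_ord -ltnS prednK // ltnW.
rewrite !inE => vi; have /connectP [[|x p] /= eip vE] := e_conn i v.
  by rewrite vE eqxx in vi.
by apply/card_gt0P; exists x; rewrite inE; case/andP: eip.
Qed.

Section HomogeneousPolya.
Variables (R : realType) (N : nat) (e : rel 'I_N).
Variables (Rb Bb : 'I_N -> nat) (Dr Db : 'I_N -> nat -> nat) (D T : nat).
Hypothesis T_gt0 : (0 < T)%N.
Hypothesis urn_size : forall j, (Rb j + Bb j = T)%N.
Hypothesis reinforce : forall j t, Dr j t = D /\ Db j t = D.

Local Notation X n := ((T + n * D)%N%:R : R).
Local Notation U := (Uprop R Rb Bb Dr Db).
Local Notation S := (Sprop R e Rb Bb Dr Db).

Lemma tot_count_homogeneous j h : tot_count Rb Bb Dr Db j h = (T + size h * D)%N.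
Proof.
rewrite /tot_count urn_size (eq_bigr (fun=> D)) ?sum_nat_const ?card_ord //.
by move=> t _; case: (reinforce j t.+1) => -> ->; case: ifP.
Qed.

Lemma red_count_rcons j h z :
  red_count Rb Dr j (rcons h z) = (red_count Rb Dr j h + z j * D)%N.
Proof.
rewrite /red_count size_rcons big_ord_recr /= nth_rcons ltnn eqxx.
rewrite (proj1 (reinforce j _)) -addnA; congr (_ + (_ + _))%N.
  by apply: eq_bigr => t _; rewrite nth_rcons ltn_ord.
by case: (z j); rewrite ?mul1n.
Qed.

Lemma X_neq0 n : X n != 0.
Proof. by rewrite pnatr_eq0 -lt0n addn_gt0 T_gt0. Qed.

Lemma Uprop_homogeneous j h : U j h = (red_count Rb Dr j h)%:R / X (size h).
Proof. by rewrite /Uprop tot_count_homogeneous. Qed.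

Lemma Sprop_mean i h : S i h = #|cnbhd e i|%:R^-1 * \sum_(j in cnbhd e i) U j h.
Proof.
rewrite /Sprop.
under eq_bigr do rewrite tot_count_homogeneous.
under [Y in _ / Y]eq_bigr do rewrite tot_count_homogeneous.
rewrite -mulr_suml sumr_const -[_ *+ #|_|]mulr_natr invfM mulrA.
by rewrite mulfK ?X_neq0 // mulrC.
Qed.

Lemma cond_exp_U_sub i h :
  cond_exp_U R e Rb Bb Dr Db i h - U i h = D%:R / X (size h).+1 * (S i h - U i h).
Proof.
set a := (red_count Rb Dr i h)%:R / X (size h).+1.
set c := D%:R / X (size h).+1.
have step_U z : U i (rcons h z) = a + (z i)%:R * c.
  rewrite /Uprop tot_count_homogeneous size_rcons red_count_rcons.
  by rewrite natrD natrM mulrDl mulrA.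
have -> : cond_exp_U R e Rb Bb Dr Db i h =
    a * \sum_z step_prob R e Rb Bb Dr Db h z
    + c * \sum_z step_prob R e Rb Bb Dr Db h z * (z i)%:R.
  rewrite /cond_exp_U !mulr_sumr -big_split; apply: eq_bigr => z _.
  by rewrite /= step_U; ring.
rewrite /step_prob sum_prod_bernoulli (sum_prod_bernoulli_marginal (S ^~ h)).
rewrite /a /c Uprop_homogeneous mulSnr addnA natrD.
by field; rewrite -!natrM -!natrD -addnA -mulSnr !X_neq0.
Qed.

Lemma cond_exp_U_sub_mean i h :
  i \notin nbhd e i ->
  cond_exp_U R e Rb Bb Dr Db i h - U i h
    = D%:R / X (size h).+1 * (#|nbhd e i|%:R / #|nbhd e i|.+1%:R)
      * (#|nbhd e i|%:R^-1 * \sum_(j in nbhd e i) U j h - U i h).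
Proof.
move=> iNi; rewrite cond_exp_U_sub Sprop_mean /cnbhd.
by rewrite (mean_setU1_sub (U ^~ h)) // !mulrA.
Qed.

End HomogeneousPolya.

Theorem theorem1 (R : realType) (N : nat) (e : rel 'I_N)
    (Rb Bb : 'I_N -> nat) (Dr Db : 'I_N -> nat -> nat) (D T : nat) (i : 'I_N) :
  (1 < N)%N ->
  (forall u v, e u v = e v u) ->
  (forall u, ~~ e u u) ->
  (forall u v, connect e u v) ->
  (forall j, (0 < Rb j)%N) -> (forall j, (0 < Bb j)%N) ->
  (forall j, Rb j + Bb j = T)%N ->
  (0 < D)%N ->
  (forall j t, Dr j t = D /\ Db j t = D) ->
  polya_martingale R e Rb Bb Dr Db i <->
  (forall n : nat, (0 < n)%N -> forall h : seq (draw N), size h = n.-1 ->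
     0 < hist_prob R e Rb Bb Dr Db h ->
     (#|nbhd e i|%:R)^-1 * \sum_(j in nbhd e i) Uprop R Rb Bb Dr Db j h
       = Uprop R Rb Bb Dr Db i h).
Proof.
move=> N_gt1 _ e_irrefl e_conn Rb_gt0 _ urn_size D_gt0 reinforce.
have T_gt0 : (0 < T)%N by rewrite -(urn_size i) addn_gt0 Rb_gt0.
have k_gt0 := connected_nbhd_gt0 i N_gt1 e_conn.
suff step_iff h : cond_exp_U R e Rb Bb Dr Db i h = Uprop R Rb Bb Dr Db i h <->
    #|nbhd e i|%:R^-1 * \sum_(j in nbhd e i) Uprop R Rb Bb Dr Db j h
      = Uprop R Rb Bb Dr Db i h.
  split=> mart n n_gt0 h size_h h_pos; apply/step_iff.
    exact: mart n n_gt0 h size_h h_pos.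
  exact: mart n n_gt0 h size_h h_pos.
have iNi : i \notin nbhd e i by rewrite inE e_irrefl.
apply: (eq_iff_subr_mul _ (cond_exp_U_sub_mean R T_gt0 urn_size reinforce h iNi)).
by rewrite !mulf_neq0 ?invr_eq0 ?pnatr_eq0 -?lt0n ?addn_gt0 ?T_gt0.
Qed.
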